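(* Let $K$ be a field of characteristic $0$, $e\ge 2$, $A,B,C\in M_e(K)$ and $d_1,d_2\in(\mathbb{Z}/e\mathbb{Z})^\times$. Then \[ A\overset{d_1}{\ast}(B\overset{d_2}{\ast}C)=(A\overset{-d_2^{-1}d_1}{\ast}B)\overset{d_2}{\ast}C. \] In particular $A\overset{d_1}{\ast}(B\overset{-1}{\ast}C)=(A\overset{d_1}{\ast}B)\overset{-1}{\ast}C$, and hence the $(-1)$-composition $\overset{-1}{\ast}$ is associative.
   Context: For $A=[a_{i,j}],B=[b_{i,j}]\in M_e(K)$ (indices modulo $e$) and $d\in(\mathbb{Z}/e\mathbb{Z})\setminus\{0\}$, the $d$-composition is $A\overset{d}{\ast}B=\big[\sum_{s=0}^{e-1}\sum_{t=0}^{e-1}a_{s,t}b_{ds+i,dt+j}\big]_{0\le i,j\le e-1}$. *)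

From HB Require Import structures.
From mathcomp Require Import all_boot all_order all_algebra.
Set Implicit Arguments. Unset Strict Implicit. Unset Printing Implicit Defensive.
Import GRing.Theory.
Local Open Scope ring_scope.

(* For i : 'I_e and a natural k, [idx i k] is the ordinal (k %% e) : 'I_e
   (the default i is never used since k %% e < e as e > 0 whenever 'I_e
   is inhabited). *)
Definition idx (e : nat) (i : 'I_e) (k : nat) : 'I_e := insubd i (k %% e)%N.

(* d-composition: (A *_d B)_{i,j} = sum_{s,t} a_{s,t} b_{ds+i, dt+j},
   indices modulo e; d is given by a natural representative. *)
Definition dcomp (K : pzRingType) (e : nat) (d : nat) (A B : 'M[K]_e) : 'M[K]_e :=
  \matrix_(i < e, j < e)
     \sum_(s < e) \sum_(t < e) A s t * B (idx i (d * s + i)) (idx j (d * t + j)).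

From HB Require Import structures.
From mathcomp Require Import all_boot all_order all_algebra zify.
Import GRing.Theory.
Local Open Scope ring_scope.

(* Expanding both sides gives the same quadruple sum over (s, t, u, v) once the
   inner summation indices of the right-hand side are shifted by d s and d t;
   the indices of C then agree modulo e as soon as d2 d + d1 = 0 mod e.
   Over Z/eZ with d2 a unit this holds for d = - d2^-1 d1, and d2 = -1 gives
   d = d1. The identity holds over any ring: neither the characteristic of K
   nor the invertibility of d1 plays a role. *)

Lemma val_idx e (i : 'I_e) k : val (idx i k) = (k %% e)%N.
Proof. by rewrite /idx val_insubd ltn_mod (leq_ltn_trans _ (ltn_ord i)). Qed.

Lemma eq_idx_mod e (i i' : 'I_e) k1 k2 :
  (k1 = k2 %[mod e])%N -> idx i k1 = idx i' k2.
Proof. by move=> eq_k; apply: val_inj; rewrite !val_idx. Qed.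

Lemma idx_shift_inj e c : injective (fun u : 'I_e => idx u (c + u)).
Proof.
move=> u v /(congr1 val); rewrite !val_idx => /eqP; rewrite eqn_modDl => /eqP.
by rewrite !modn_small // => /val_inj.
Qed.

Lemma exchange_big22 (R : nmodType) (I J : finType) (F : I -> I -> J -> J -> R) :
  \sum_(u : I) \sum_(v : I) \sum_(s : J) \sum_(t : J) F u v s t =
  \sum_(s : J) \sum_(t : J) \sum_(u : I) \sum_(v : I) F u v s t.
Proof.
under eq_bigr do rewrite exchange_big.
rewrite exchange_big.
under eq_bigr do under eq_bigr do rewrite exchange_big.
by under eq_bigr do rewrite exchange_big.
Qed.

Lemma dcompA_index_mod e (d1 d2 d s u i : nat) :
  (d2 * d + d1 = 0 %[mod e])%N ->
  (d2 * ((d * s + u) %% e) + (d1 * s + i) %% e = d2 * u + i %[mod e])%N.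
Proof.
move=> d_eq; rewrite modnDmr -modnDml modnMmr modnDml.
have -> : (d2 * (d * s + u) + (d1 * s + i) = (d2 * d + d1) * s + (d2 * u + i))%N.
  by rewrite !mulnDr !mulnDl !mulnA; lia.
by rewrite -modnDml -modnMml d_eq mod0n mul0n mod0n add0n.
Qed.

Lemma dcompA_nat (K : pzRingType) e (d1 d2 d : nat) (A B C : 'M[K]_e) :
  (d2 * d + d1 = 0 %[mod e])%N ->
  dcomp d1 A (dcomp d2 B C) = dcomp d2 (dcomp d A B) C.
Proof.
move=> d_eq; apply/matrixP => i j; rewrite !mxE.
under eq_bigr do under eq_bigr do rewrite mxE big_distrr /=.
under [RHS]eq_bigr do under eq_bigr do rewrite mxE big_distrl /=.
under [RHS]eq_bigr do under eq_bigr do under eq_bigr do rewrite big_distrl /=.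
rewrite exchange_big22; apply: eq_bigr => s _; apply: eq_bigr => t _.
rewrite (reindex_inj (@idx_shift_inj e (d * s))); apply: eq_bigr => u _.
rewrite mulr_sumr (reindex_inj (@idx_shift_inj e (d * t))); apply: eq_bigr => v _.
rewrite -mulrA; congr (_ * (_ * C _ _)); apply: eq_idx_mod.
  by rewrite !val_idx dcompA_index_mod.
by rewrite !val_idx dcompA_index_mod.
Qed.

Lemma dcompA_Zp (K : pzRingType) n (d1 d2 : 'Z_n) (A B C : 'M[K]_n) :
  (1 < n)%N -> d2 \is a GRing.unit ->
  dcomp d1 A (dcomp d2 B C) = dcomp d2 (dcomp (- (d2^-1 * d1)) A B) C.
Proof.
case: n d1 d2 A B C => [|[|n]] // d1 d2 A B C _ d2_unit; apply: dcompA_nat.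
have d_eq : d2 * - (d2^-1 * d1) + d1 = 0.
  by rewrite mulrN mulrA mulrV // mul1r addNr.
by rewrite -modnDml; exact: (congr1 val d_eq).
Qed.

Lemma dcompA_N1 (K : pzRingType) n (d : 'Z_n) (A B C : 'M[K]_n) :
  (1 < n)%N ->
  dcomp d A (dcomp ((-1)%R : 'Z_n) B C) = dcomp ((-1)%R : 'Z_n) (dcomp d A B) C.
Proof.
by move=> n_gt1; rewrite dcompA_Zp ?unitrN1 // invrN1 mulN1r opprK.
Qed.

Theorem proposition3p4 (K : fieldType) (e : nat) (he : (2 <= e)%N)
  (hchar : [pchar K] =i pred0)
  (A B C : 'M[K]_e) (d1 d2 : 'Z_e)
  (hd1 : d1 \is a GRing.unit) (hd2 : d2 \is a GRing.unit) :
  [/\ dcomp d1 A (dcomp d2 B C) = dcomp d2 (dcomp ((- (d2^-1 * d1))%R : 'Z_e) A B) C,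
      dcomp d1 A (dcomp ((-1)%R : 'Z_e) B C) = dcomp ((-1)%R : 'Z_e) (dcomp d1 A B) C
    & forall X Y Z : 'M[K]_e,
        dcomp ((-1)%R : 'Z_e) X (dcomp ((-1)%R : 'Z_e) Y Z)
        = dcomp ((-1)%R : 'Z_e) (dcomp ((-1)%R : 'Z_e) X Y) Z].
Proof.
split; [exact: dcompA_Zp | exact: dcompA_N1 |].
by move=> X Y Z; apply: dcompA_N1.
Qed.
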